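(* Let $a\in\mathbb{R}^n$, $d\in\mathbb{R}^m$ with $\|a\|\ge\|d\|$. Let $(\bar x,\bar y)\in\mathbb{R}^{n+m}$ satisfy $\|\bar x\|>\|\bar y\|$ and $a^\mathsf{T}\bar x+d^\mathsf{T}\bar y\le0$, let $\lambda=\bar x/\|\bar x\|$, and let $\phi_\lambda(y)=\max_x\{\lambda^\mathsf{T} x:\|x\|\le\|y\|,\ a^\mathsf{T} x+d^\mathsf{T} y\le0\}$ for $y\in\mathbb{R}^m$. Let $L=\{(x,y):\lambda^\mathsf{T} x=0,\ y=0\}$, so that $L^\perp=\langle\lambda\rangle\times\mathbb{R}^m$ is identified with $\mathbb{R}\times\mathbb{R}^m$ via $(t\lambda,y)\leftrightarrow(t,y)$. Then the orthogonal projection of $(\bar x,\bar y)$ onto $L^\perp$, namely $(\lambda^\mathsf{T}\bar x,\bar y)$, lies in the interior of the epigraph $\{(t,y)\in\mathbb{R}\times\mathbb{R}^m:\phi_\lambda(y)\le t\}$.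
   Context: $\|\cdot\|$ is the Euclidean norm. *)

From HB Require Import structures.
From mathcomp Require Import all_boot all_order all_algebra.
From mathcomp Require Import all_classical all_reals all_analysis.
Set Implicit Arguments. Unset Strict Implicit. Unset Printing Implicit Defensive.
Import Order.TTheory GRing.Theory Num.Theory.
Import numFieldNormedType.Exports.
Local Open Scope classical_set_scope.
Local Open Scope ring_scope.

Definition dotp (R : realType) (n : nat) (u v : 'rV[R]_n) : R :=
  \sum_(i < n) u ord0 i * v ord0 i.

Definition enorm (R : realType) (n : nat) (u : 'rV[R]_n) : R :=
  Num.sqrt (dotp u u).

Definition phi (R : realType) (n m : nat) (a lam : 'rV[R]_n) (d : 'rV[R]_m)
    (y : 'rV[R]_m) : R :=
  sup [set dotp lam x | x in [set x : 'rV[R]_n |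
         enorm x <= enorm y /\ dotp a x + dotp d y <= 0]].

Definition epi (R : realType) (n m : nat) (a lam : 'rV[R]_n) (d : 'rV[R]_m)
    : set (R * 'rV[R]_m) :=
  [set p | phi a lam d p.2 <= p.1].

From HB Require Import structures.
From mathcomp Require Import all_boot all_order all_algebra.
From mathcomp Require Import all_classical all_reals all_analysis.
From mathcomp Require Import ring.
Import Order.TTheory GRing.Theory Num.Theory.
Import numFieldNormedType.Exports.
Local Open Scope classical_set_scope.
Local Open Scope ring_scope.

(* Since [lam] is a unit vector, Cauchy-Schwarz gives [phi_lam(y) <= ||y||]
   for every [y] (also when the feasible set is empty, as [sup set0 = 0]).
   Hence the open set [{(t, y) | ||y|| < t}] lies inside the epigraph, and it
   contains [(lam^T xbar, ybar) = (||xbar||, ybar)] because [||xbar|| > ||ybar||]. *)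

Lemma lagrange_identity {R : comPzRingType} {I : finType} (f g : I -> R) :
  \sum_i \sum_j (f i * g j - f j * g i) ^+ 2 =
  ((\sum_i f i ^+ 2) * (\sum_i g i ^+ 2) - (\sum_i f i * g i) ^+ 2) *+ 2.
Proof.
have fg_gf : (\sum_i f i ^+ 2) * (\sum_j g j ^+ 2) = \sum_i \sum_j f j ^+ 2 * g i ^+ 2.
  by rewrite mulrC big_distrlr; apply: eq_bigr => i _; apply: eq_bigr => j _; rewrite mulrC.
rewrite mulrnBl mulr2n {1}big_distrlr fg_gf expr2 big_distrlr.
rewrite -big_split -sumrMnl -sumrB /=.
apply: eq_bigr => i _; rewrite -big_split -sumrMnl -sumrB /=.
by apply: eq_bigr => j _; ring.
Qed.

Section EuclideanSpace.
Context {R : realType} {k : nat}.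
Implicit Types (u v : 'rV[R]_k) (c : R).

Lemma dotpC u v : dotp u v = dotp v u.
Proof. by apply: eq_bigr => i _; rewrite mulrC. Qed.

Lemma dotpZl c u v : dotp (c *: u) v = c * dotp u v.
Proof. by rewrite /dotp mulr_sumr; apply: eq_bigr => i _; rewrite mxE mulrA. Qed.

Lemma dotpZr c u v : dotp u (c *: v) = c * dotp u v.
Proof. by rewrite dotpC dotpZl dotpC. Qed.

Lemma dotpp_ge0 u : 0 <= dotp u u.
Proof. by apply: sumr_ge0 => i _; rewrite -expr2 sqr_ge0. Qed.

Lemma enorm_sqr u : enorm u ^+ 2 = dotp u u.
Proof. exact/sqr_sqrtr/dotpp_ge0. Qed.

Lemma enormZ c u : enorm (c *: u) = `|c| * enorm u.
Proof. by rewrite /enorm dotpZl dotpZr mulrA -expr2 sqrtrM ?sqr_ge0 ?sqrtr_sqr. Qed.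

Lemma dotp_sqr_le u v : dotp u v ^+ 2 <= dotp u u * dotp v v.
Proof.
have : 0 <= (dotp u u * dotp v v - dotp u v ^+ 2) *+ 2.
  rewrite -[_ *+ 2](lagrange_identity (fun i => u ord0 i) (fun i => v ord0 i)).
  by do 2!(apply: sumr_ge0 => ? _); exact: sqr_ge0.
by rewrite pmulrn_lge0 // subr_ge0.
Qed.

Lemma dotp_le_enorm u v : dotp u v <= enorm u * enorm v.
Proof.
apply: le_trans (ler_norm _) _.
rewrite -sqrtr_sqr /enorm -sqrtrM ?dotpp_ge0 //.
by rewrite ler_sqrt ?dotp_sqr_le // mulr_ge0 ?dotpp_ge0.
Qed.

Lemma continuous_enorm : continuous (@enorm R k).
Proof.
move=> u; apply: continuous_comp; last exact: sqrt_continuous.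
apply: (continuous_big add_continuous) => i _ w.
by apply: continuousM; exact: (@coord_continuous R 1 k ord0 i).
Qed.

End EuclideanSpace.

Section Epigraph.
Context {R : realType} {n m : nat}.
Variables (a lam : 'rV[R]_n) (d : 'rV[R]_m).

Lemma phi_le_enorm y : enorm lam <= 1 -> phi a lam d y <= enorm y.
Proof.
move=> lam_le1; rewrite /phi; set S := [set _ | _ in _].
have [->|/set0P S_neq0] := eqVneq S set0; first by rewrite sup0 sqrtr_ge0.
apply: ge_sup S_neq0 _ => _ [x [x_le _] <-]; apply: le_trans x_le.
apply: le_trans (dotp_le_enorm _ _) _.
by rewrite ler_piMl ?sqrtr_ge0.
Qed.

Lemma open_enorm_lt : open [set p : R * 'rV[R]_m | enorm p.2 < p.1].
Proof.
have -> : [set p : R * 'rV[R]_m | enorm p.2 < p.1] =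
    (fun p => p.1 - enorm p.2) @^-1` [set r | 0 < r].
  by apply/seteqP; split => p /=; rewrite subr_gt0.
apply: open_comp (@open_gt _ 0) => p _.
apply: continuousB; first exact: cvg_fst.
by apply: continuous_comp; [exact: cvg_snd | exact: continuous_enorm].
Qed.

Lemma enorm_lt_sub_interior_epi :
  enorm lam <= 1 -> [set p | enorm p.2 < p.1] `<=` interior (epi a lam d).
Proof.
move=> lam_le1; rewrite -(proj1 (interior_id _) open_enorm_lt).
by apply: interiorS => p /ltW; apply: le_trans (phi_le_enorm _ lam_le1).
Qed.

End Epigraph.

Theorem lemma1 (R : realType) (n m : nat)
    (a xbar : 'rV[R]_n) (d ybar : 'rV[R]_m) :
  enorm a >= enorm d ->
  enorm xbar > enorm ybar ->
  dotp a xbar + dotp d ybar <= 0 ->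
  let lam := (enorm xbar)^-1 *: xbar in
  (interior (epi a lam d)) (dotp lam xbar, ybar).
Proof.
move=> _ xbar_gt _ lam.
have xbar_gt0 : 0 < enorm xbar by apply: le_lt_trans (sqrtr_ge0 _) xbar_gt.
have lam_unit : enorm lam = 1.
  by rewrite enormZ ger0_norm ?invr_ge0 ?ltW // mulVf ?gt_eqF.
have lam_xbar : dotp lam xbar = enorm xbar.
  by rewrite dotpZl -enorm_sqr expr2 mulKf ?gt_eqF.
have lam_le1 : enorm lam <= 1 by rewrite lam_unit.
apply: (enorm_lt_sub_interior_epi a lam d lam_le1).
by rewrite /= lam_xbar.
Qed.
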